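(* In the setting described in the context, let $$X=W^{1/2}R^T\big(RWR^TL_{e,s}^\tau RWR^T\big)^{-1}RW^{1/2},\qquad X_1=W^{-1/2}R^\dagger(L_{e,s}^\tau)^{-1}(R^\dagger)^TW^{-1/2},$$ where $R^\dagger$ is the Moore–Penrose pseudoinverse of $R$. Then $\lambda_{\max}(X_1)\ge\lambda_{\max}(X)$.
   Context: Let $\mathcal G$ be an undirected, connected graph without self-loops, with node set $\{1,\dots,n\}$ ($n\ge2$) and edge set $\mathcal E$, $m=|\mathcal E|$. Give each edge an arbitrary orientation; the incidence matrix $D\in\mathbb R^{n\times m}$ has $D_{il}=1$ if node $i$ is the initial node of edge $l$, $-1$ if it is the terminal node, and $0$ otherwise. Fix a spanning tree $\mathcal G_\tau$ and order the edges so the first $n-1$ are tree edges; write $D=[D_\tau\ D_c]$ with $D_\tau\in\mathbb R^{n\times(n-1)}$. Set $T_\tau^c=(D_\tau^TD_\tau)^{-1}D_\tau^TD_c$ and $R=[I_{n-1}\ T_\tau^c]\in\mathbb R^{(n-1)\times m}$. Let $W=\mathrm{diag}(w_1,\dots,w_m)$, $w_l>0$, and $E=\mathrm{diag}(\epsilon_1,\dots,\epsilon_n)$, $\epsilon_i>0$; powers of these diagonal matrices are taken entrywise. Define $L_{e,s}^\tau=D_\tau^TE^{-1}D_\tau$. $\lambda_{\max}$ denotes the largest eigenvalue of a symmetric matrix. *)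

From HB Require Import structures.
From mathcomp Require Import all_boot all_order all_algebra.
From mathcomp Require Import polyrcf.
Set Implicit Arguments. Unset Strict Implicit. Unset Printing Implicit Defensive.
Import Order.TTheory GRing.Theory Num.Theory.
Local Open Scope ring_scope.

(* A graph with node set 'I_n and edge set 'I_m, each edge l given an
   orientation: initial node s l, terminal node t l. *)

Definition simple_graph (n m : nat) (s t : 'I_m -> 'I_n) : Prop :=
  (forall l, s l != t l) /\
  (forall l l', l != l' ->
     ~~ (((s l == s l') && (t l == t l')) || ((s l == t l') && (t l == s l')))).

Definition gadj (n m : nat) (s t : 'I_m -> 'I_n) (P : pred 'I_m) : rel 'I_n :=
  fun i j => [exists l, P l && (((s l == i) && (t l == j)) || ((s l == j) && (t l == i)))].

Definition connected_on (n m : nat) (s t : 'I_m -> 'I_n) (P : pred 'I_m) : Prop :=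
  forall i j : 'I_n, connect (gadj s t P) i j.

(* edges are 'I_(n.-1 + k); the first n-1 edges (val l < n.-1) form a spanning tree:
   a connected spanning subgraph with exactly n-1 edges *)
Definition first_edges_spanning_tree (n k : nat) (s t : 'I_(n.-1 + k) -> 'I_n) : Prop :=
  connected_on s t (fun l => (val l < n.-1)%N).

Definition incidence (R : ringType) (n m : nat) (s t : 'I_m -> 'I_n) : 'M[R]_(n, m) :=
  \matrix_(i, l) (if s l == i then 1 else if t l == i then -1 else 0).

Section Mats.
Variables (R : rcfType) (n k : nat) (s t : 'I_(n.-1 + k) -> 'I_n).
Variables (w : 'I_(n.-1 + k) -> R) (eps : 'I_n -> R).

Definition Dmat : 'M[R]_(n, n.-1 + k) := incidence R s t.
Definition Dtau : 'M[R]_(n, n.-1) := lsubmx Dmat.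
Definition Dc : 'M[R]_(n, k) := rsubmx Dmat.
Definition Ttc : 'M[R]_(n.-1, k) := invmx (Dtau^T *m Dtau) *m Dtau^T *m Dc.
Definition Rmat : 'M[R]_(n.-1, n.-1 + k) := row_mx 1%:M Ttc.

Definition Wmat : 'M[R]_(n.-1 + k) := diag_mx (\row_l w l).
Definition Wsqrt : 'M[R]_(n.-1 + k) := diag_mx (\row_l Num.sqrt (w l)).
Definition Wsqrtinv : 'M[R]_(n.-1 + k) := diag_mx (\row_l (Num.sqrt (w l))^-1).
Definition Einv : 'M[R]_n := diag_mx (\row_i (eps i)^-1).

Definition Lest : 'M[R]_(n.-1) := Dtau^T *m Einv *m Dtau.

Definition Xmat : 'M[R]_(n.-1 + k) :=
  Wsqrt *m Rmat^T
  *m invmx (Rmat *m Wmat *m Rmat^T *m Lest *m Rmat *m Wmat *m Rmat^T)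
  *m Rmat *m Wsqrt.

Definition X1mat (Rd : 'M[R]_(n.-1 + k, n.-1)) : 'M[R]_(n.-1 + k) :=
  Wsqrtinv *m Rd *m invmx Lest *m Rd^T *m Wsqrtinv.
End Mats.

(* B is the Moore-Penrose pseudoinverse of A (the four Penrose conditions, real case) *)
Definition is_MP_pinv (R : ringType) (p q : nat) (A : 'M[R]_(p, q)) (B : 'M[R]_(q, p)) : Prop :=
  [/\ A *m B *m A = A, B *m A *m B = B, (A *m B)^T = A *m B & (B *m A)^T = B *m A].

(* largest eigenvalue: the maximum of the real roots of the characteristic
   polynomial (the eigenvalues); 0 if there are none (never the case for
   symmetric matrices of positive size) *)
Definition lambda_max (R : rcfType) (p : nat) (A : 'M[R]_p) : R :=
  let rs := rootsR (char_poly A) in foldr Num.max (head 0 rs) rs.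

From HB Require Import structures.
From mathcomp Require Import all_boot all_order all_algebra.
From mathcomp Require Import polyrcf complex sesquilinear spectral zify.
Set Implicit Arguments. Unset Strict Implicit. Unset Printing Implicit Defensive.
Import Order.TTheory GRing.Theory Num.Theory.
Local Open Scope ring_scope.

(** Put A = R W^(1/2) and B = (R^dag)^T W^(-1/2). Since R = [I T] has a right
    inverse, the Penrose condition R R^dag R = R forces R R^dag = I, so A B^T = I.
    Then X = A^T (A A^T L A A^T)^(-1) A and X_1 = B^T L^(-1) B, and on the row
    space of A both quadratic forms agree: zA maps to z L^(-1) z^T. An eigenvector
    of X for a nonzero eigenvalue lies in that row space, so the Rayleigh quotient
    of X_1 at a top eigenvector of X is lambda_max(X), and the Rayleigh bound for
    the symmetric matrix X_1 concludes. If lambda_max(X) <= 0, it suffices that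
    X_1 is positive semidefinite, L being positive definite because the tree part
    D_tau of the incidence matrix has full column rank. *)

Section PositiveDefinite.
Variable F : realFieldType.

Definition posdefmx p (A : 'M[F]_p) :=
  forall x : 'rV_p, x != 0 -> 0 < (x *m A *m x^T) 0 0.

Lemma posdefmx_form_ge0 p (A : 'M[F]_p) (x : 'rV_p) :
  posdefmx A -> 0 <= (x *m A *m x^T) 0 0.
Proof.
move=> Apd; have [->|/Apd/ltW //] := eqVneq x 0.
by rewrite !mul0mx mxE.
Qed.

Lemma posdefmx_unit p (A : 'M[F]_p) : posdefmx A -> A \in unitmx.
Proof.
move=> Apd; rewrite -row_free_unit -kermx_eq0; apply/rowV0P => x /sub_kermxP xA0.
apply/eqP/negP => /negP/Apd; by rewrite xA0 mul0mx mxE ltxx.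
Qed.

Lemma posdefmx_diag p (d : 'rV[F]_p) : (forall i, 0 < d 0 i) -> posdefmx (diag_mx d).
Proof.
move=> d_gt0 x x0; rewrite mul_mx_diag mxE.
have /existsP [j xj0] : [exists j, x 0 j != 0].
  apply: contraR x0 => /existsPn xj0; apply/eqP/rowP => j; rewrite mxE.
  exact/eqP/negPn/xj0.
have term_ge0 i : 0 <= (\matrix_(a, b) (x a b * d 0 b)) 0 i * x^T i 0.
  by rewrite !mxE mulrAC -expr2 mulr_ge0 ?sqr_ge0 ?ltW.
rewrite lt0r psumr_neq0 ?sumr_ge0 // andbT; apply/hasP.
exists j; rewrite ?mem_index_enum //.
by rewrite !mxE mulrAC -expr2 mulr_gt0 // lt0r sqr_ge0 sqrf_eq0 xj0.
Qed.

Lemma posdefmx1 p : posdefmx (1%:M : 'M[F]_p).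
Proof. by rewrite -diag_const_mx; apply: posdefmx_diag => i; rewrite mxE ltr01. Qed.

Lemma posdefmx_congr m p (A : 'M[F]_p) (B : 'M[F]_(m, p)) :
  row_free B -> posdefmx A -> posdefmx (B *m A *m B^T).
Proof.
move=> Bfree Apd x x0; rewrite !mulmxA -(trmxK x) -mulmxA -trmx_mul trmxK.
by apply: Apd; rewrite mulmx_free_eq0.
Qed.

Lemma posdefmx_gram m p (A : 'M[F]_(m, p)) : row_free A -> posdefmx (A *m A^T).
Proof.
by move=> A_free; rewrite -[A in A *m _]mulmx1; exact: posdefmx_congr A_free (@posdefmx1 p).
Qed.

Lemma posdefmx_inv p (A : 'M[F]_p) : A^T = A -> posdefmx A -> posdefmx (invmx A).
Proof.
move=> Asym Apd; have Au := posdefmx_unit Apd.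
have -> : invmx A = invmx A *m A *m (invmx A)^T.
  by rewrite mulVmx // mul1mx trmx_inv Asym.
by apply: posdefmx_congr Apd; rewrite row_free_unit unitmx_inv.
Qed.

End PositiveDefinite.

Lemma foldr_max_mem (R : realDomainType) (x0 : R) (s : seq R) :
  foldr Num.max x0 s \in x0 :: s.
Proof.
elim: s => [|x s IH] /=; first exact: mem_head.
rewrite !inE; case: (ltP (foldr Num.max x0 s) x) => _; first by rewrite eqxx orbT.
by move: IH; rewrite inE => /orP[->|->]; rewrite ?orbT.
Qed.

Lemma foldr_max_ge (R : realDomainType) (x0 : R) (s : seq R) x :
  x \in s -> x <= foldr Num.max x0 s.
Proof.
elim: s => [|y s IH] //=; rewrite inE le_max => /predU1P[->|/IH ->];
  by rewrite ?lexx ?orbT.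
Qed.

Section LambdaMax.
Variables (R : rcfType) (p : nat).
Implicit Types A : 'M[R]_p.

Lemma mem_rootsR_char_poly A r : (r \in rootsR (char_poly A)) = root (char_poly A) r.
Proof. by rewrite -(roots_on_rootsR (monic_neq0 (char_poly_monic A))). Qed.

Lemma root_char_poly_le_lambda_max A r : root (char_poly A) r -> r <= lambda_max A.
Proof. by rewrite -mem_rootsR_char_poly; apply: foldr_max_ge. Qed.

Lemma lambda_max_eigenvalue A : lambda_max A != 0 -> eigenvalue A (lambda_max A).
Proof.
rewrite eigenvalue_root_char -mem_rootsR_char_poly /lambda_max.
case: (rootsR _) => [|x s] /=; first by rewrite eqxx.
move=> _; have /= := foldr_max_mem x (x :: s).
by rewrite inE => /predU1P[->|]; rewrite ?mem_head.
Qed.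

Lemma lambda_max_ge0 A :
  (forall c : 'rV_p, 0 <= (c *m A *m c^T) 0 0) -> 0 <= lambda_max A.
Proof.
move=> A_ge0; have [->//|] := eqVneq (lambda_max A) 0.
move=> /lambda_max_eigenvalue/eigenvalueP [v vA v0].
have := posdefmx1 v0; rewrite mulmx1 => vv_gt0.
by have := A_ge0 v; rewrite vA -scalemxAl mxE pmulr_lge0.
Qed.

End LambdaMax.

Lemma eigenvalue_spectral_diag (C : numClosedFieldType) n (A : 'M[C]_n) i :
  A \is normalmx -> eigenvalue A (spectral_diag A 0 i).
Proof.
move=> /orthomx_spectralP A_eq; have U_unit := spectral_unit A.
set U := spectralmx A in A_eq U_unit *; set d := spectral_diag A in A_eq *.
apply/eigenvalueP; exists (row i U).
  rewrite [in LHS]A_eq rowE !mulmxA mulmxK //.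
  by rewrite -[_ *m diag_mx d]rowE row_diag_mx -scalemxAl -rowE.
rewrite rowE mulmx_free_eq0 ?row_free_unit //; apply/eqP => /matrixP /(_ 0 i).
by rewrite !mxE !eqxx => /eqP; rewrite oner_eq0.
Qed.

Section Rayleigh.
Variables (R : rcfType) (q : nat) (S : 'M[R]_q).
Hypothesis S_sym : S^T = S.
Local Notation toC := (real_complex R).
Local Notation Sc := (map_mx toC S).

Lemma conjC_real_complex (x : R) : (toC x)^* = toC x.
Proof. by apply: conj_Creal; rewrite complex_real. Qed.

Lemma map_real_complex_hermsym : Sc \is hermsymmx.
Proof.
apply/is_hermitianmxP; rewrite expr0 scale1r; apply/matrixP => i j.
by rewrite !mxE conjC_real_complex -[in RHS]S_sym mxE.
Qed.

Lemma spectral_diag_le_lambda_max i : spectral_diag Sc 0 i <= toC (lambda_max S).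
Proof.
have S_herm := map_real_complex_hermsym.
have d_real : spectral_diag Sc 0 i \is Num.real.
  by move/mxOverP: (hermitian_spectral_diag_real S_herm).
have := eigenvalue_spectral_diag i (hermitian_normalmx S_herm).
rewrite eigenvalue_root_char -(RRe_real d_real) -map_char_poly fmorph_root lecR.
exact: root_char_poly_le_lambda_max.
Qed.

Lemma rayleigh_le_lambda_max (c : 'rV[R]_q) :
  (c *m S *m c^T) 0 0 <= lambda_max S * (c *m c^T) 0 0.
Proof.
have /orthomx_spectralP Sc_eq := hermitian_normalmx map_real_complex_hermsym.
have U_unitary := spectral_unitarymx Sc.
set U := spectralmx Sc in Sc_eq U_unitary; set d := spectral_diag Sc in Sc_eq.
set z := map_mx toC c; set w := z *m U^t*%sesqui.
have zE : z = w *m U by rewrite -mulmxA -invmx_unitary // mulVmx ?mulmx1 ?spectral_unit.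
have UUt : U *m U^t*%sesqui = 1%:M by apply/unitarymxP.
have ctE : map_mx toC c^T = z^t*%sesqui.
  by apply/matrixP => i j; rewrite !mxE conjC_real_complex.
have entryE (B : 'M[R]_1) : toC (B 0 0) = map_mx toC B 0 0 by rewrite mxE.
have quadE : toC ((c *m S *m c^T) 0 0) = \sum_j d 0 j * (w 0 j * (w 0 j)^*).
  rewrite entryE !map_mxM ctE -/z Sc_eq zE trmx_mul map_mxM invmx_unitary //.
  rewrite !mulmxA -(mulmxA w) UUt mulmx1 -(mulmxA _ U) UUt mulmx1 mul_mx_diag mxE.
  by apply: eq_bigr => j _; rewrite !mxE mulrAC mulrC.
have normE : toC ((c *m c^T) 0 0) = \sum_j w 0 j * (w 0 j)^*.
  rewrite entryE map_mxM ctE -/z zE trmx_mul map_mxM !mulmxA -(mulmxA w) UUt mulmx1 mxE.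
  by apply: eq_bigr => j _; rewrite !mxE.
suff : toC ((c *m S *m c^T) 0 0) <= toC (lambda_max S) * toC ((c *m c^T) 0 0).
  by rewrite -rmorphM lecR.
rewrite quadE normE mulr_sumr; apply: ler_sum => j _.
by apply: ler_wpM2r; [exact: mul_conjC_ge0 | exact: spectral_diag_le_lambda_max].
Qed.

End Rayleigh.

Section RightInverseForms.
Variables (R : rcfType) (p q : nat) (A B : 'M[R]_(p, q)) (L : 'M[R]_p).
Hypotheses (AB1 : A *m B^T = 1%:M) (L_sym : L^T = L) (L_pd : posdefmx L).

Local Notation M := (A *m A^T).
Local Notation K := (M *m L *m M).
Local Notation X := (A^T *m invmx K *m A).
Local Notation X1 := (B^T *m invmx L *m B).

Lemma gram_invmx_sandwich : M *m invmx K *m M = invmx L.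
Proof.
have M_unit : M \in unitmx.
  by apply/posdefmx_unit/posdefmx_gram/row_freeP; exists B^T.
have L_unit := posdefmx_unit L_pd.
have K_unit : K \in unitmx by rewrite !unitmx_mul M_unit L_unit.
suff MKML : M *m invmx K *m M *m L = 1%:M by rewrite -[LHS](mulmxK L_unit) MKML mul1mx.
rewrite -[LHS](mulmxK M_unit).
have -> : M *m invmx K *m M *m L *m M = M *m (invmx K *m K) by rewrite !mulmxA.
by rewrite mulVmx // mulmx1 mulmxV.
Qed.

Lemma rowspace_form_X (z : 'rV_p) : z *m A *m X *m (z *m A)^T = z *m invmx L *m z^T.
Proof. by rewrite -gram_invmx_sandwich trmx_mul !mulmxA. Qed.

Lemma rowspace_form_X1 (z : 'rV_p) : z *m A *m X1 *m (z *m A)^T = z *m invmx L *m z^T.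
Proof.
have BA1 : B *m A^T = 1%:M by rewrite -[B]trmxK -trmx_mul AB1 trmx1.
by rewrite trmx_mul !mulmxA -(mulmxA z) AB1 mulmx1 -!(mulmxA _ B) BA1 mulmx1.
Qed.

Lemma eigenvector_X_rowspace (v : 'rV_q) lam :
  v *m X = lam *: v -> lam != 0 -> exists z : 'rV_p, v = z *m A.
Proof.
move=> vX lam_neq0; exists (lam^-1 *: (v *m A^T *m invmx K)).
by rewrite -scalemxAl -2!mulmxA (mulmxA A^T) vX scalerA mulVf // scale1r.
Qed.

Lemma X1_sym : X1^T = X1.
Proof. by rewrite !trmx_mul trmxK trmx_inv L_sym mulmxA. Qed.

Lemma X1_form_ge0 (c : 'rV_q) : 0 <= (c *m X1 *m c^T) 0 0.
Proof.
have -> : c *m X1 *m c^T = c *m B^T *m invmx L *m (c *m B^T)^T.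
  by rewrite trmx_mul trmxK !mulmxA.
exact/posdefmx_form_ge0/posdefmx_inv.
Qed.

Theorem lambda_max_right_inverse_form_le : lambda_max X <= lambda_max X1.
Proof.
have [lam_le0|lam_gt0] := lerP (lambda_max X) 0.
  exact: le_trans lam_le0 (lambda_max_ge0 X1_form_ge0).
have lam_neq0 := lt0r_neq0 lam_gt0.
have /eigenvalueP [v vX v0] := lambda_max_eigenvalue lam_neq0.
have [z vE] := eigenvector_X_rowspace vX lam_neq0.
have vv_gt0 : 0 < (v *m v^T) 0 0 by have := posdefmx1 v0; rewrite mulmx1.
have X1_rayleigh : (v *m X1 *m v^T) 0 0 = lambda_max X * (v *m v^T) 0 0.
  by rewrite vE rowspace_form_X1 -rowspace_form_X -vE vX -scalemxAl mxE.
by rewrite -(ler_pM2r vv_gt0) -X1_rayleigh rayleigh_le_lambda_max // X1_sym.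
Qed.

End RightInverseForms.

Lemma row_mul_incidence (R : nzRingType) n m (s t : 'I_m -> 'I_n) (r : 'rV[R]_n) l :
  s l != t l -> (r *m incidence R s t) 0 l = r 0 (s l) - r 0 (t l).
Proof.
move=> st_neq; rewrite mxE (bigD1 (s l)) //= (bigD1 (t l)) 1?eq_sym //= big1.
  by rewrite !mxE eqxx (negbTE st_neq) eqxx addr0 mulr1 mulrN1.
move=> i /andP[/negbTE si /negbTE ti]; rewrite !mxE.
by rewrite eq_sym si eq_sym ti mulr0.
Qed.

Lemma inner_inverse_right_inverse (R : pzRingType) p q
    (A : 'M[R]_(p, q)) (G B : 'M[R]_(q, p)) :
  A *m G = 1%:M -> A *m B *m A = A -> A *m B = 1%:M.
Proof. by move=> AG ABA; rewrite -[LHS]mulmx1 -AG mulmxA ABA. Qed.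

Section GraphMatrices.
Variables (R : rcfType) (n k : nat) (s t : 'I_(n.-1 + k) -> 'I_n).
Variables (w : 'I_(n.-1 + k) -> R) (eps : 'I_n -> R).
Hypotheses (no_loop : forall l, s l != t l) (tree : first_edges_spanning_tree s t).
Hypotheses (w_gt0 : forall l, 0 < w l) (eps_gt0 : forall i, 0 < eps i).

Lemma mulmx_Dtau_eq0_const (r : 'rV[R]_n) :
  r *m Dtau R s t = 0 -> forall a b, r 0 a = r 0 b.
Proof.
move=> rD0 a b; have /connectP [path_ab tree_path ->] := tree a b.
elim: path_ab a tree_path => [|c path_cb IH] a //= /andP[/existsP [l /andP[l_tree ac]]].
move=> /IH <-; move/rowP: rD0 => /(_ (Ordinal l_tree)).
rewrite mulmx_lsub mxE (_ : lshift k _ = l); last exact: val_inj.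
rewrite row_mul_incidence // mxE => /eqP; rewrite subr_eq0 => /eqP.
by case/orP: ac => /andP[/eqP-> /eqP->].
Qed.

Lemma trDtau_row_free : row_free (Dtau R s t)^T.
Proof.
have ker_le1 : (\rank (kermx (Dtau R s t)) <= 1)%N.
  apply: (leq_trans _ (rank_leq_row (const_mx 1 : 'rV[R]_n))); apply: mxrankS.
  apply/row_subP => i; set r := row i _.
  have /mulmx_Dtau_eq0_const r_const : r *m Dtau R s t = 0.
    by rewrite /r -row_mul mulmx_ker row0.
  clearbody r; have -> : r = r 0 i *: const_mx 1.
    by apply/rowP => j; rewrite !mxE mulr1 (r_const j i).
  by rewrite scalemx_sub.
rewrite /row_free mxrank_tr eqn_leq rank_leq_col /=.
by move: ker_le1; rewrite mxrank_ker; lia.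
Qed.

Lemma Lest_sym : (Lest s t eps)^T = Lest s t eps.
Proof. by rewrite !trmx_mul trmxK tr_diag_mx mulmxA. Qed.

Lemma Lest_posdef : posdefmx (Lest s t eps).
Proof.
rewrite /Lest -[X in _ *m X]trmxK.
by apply: posdefmx_congr trDtau_row_free (posdefmx_diag _) => i; rewrite mxE invr_gt0.
Qed.

Lemma Wsqrt_sym : (Wsqrt w)^T = Wsqrt w.
Proof. exact: tr_diag_mx. Qed.

Lemma Wsqrtinv_sym : (Wsqrtinv w)^T = Wsqrtinv w.
Proof. exact: tr_diag_mx. Qed.

Lemma Wsqrt_sqr : Wsqrt w *m Wsqrt w = Wmat w.
Proof.
rewrite mulmx_diag; congr diag_mx; apply/rowP => l.
by rewrite !mxE -expr2 sqr_sqrtr // ltW.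
Qed.

Lemma Wsqrt_mulV : Wsqrt w *m Wsqrtinv w = 1%:M.
Proof.
rewrite mulmx_diag -diag_const_mx; congr diag_mx; apply/rowP => l.
by rewrite !mxE mulfV // gt_eqF // sqrtr_gt0.
Qed.

Local Notation A := (Rmat R s t *m Wsqrt w).

Lemma XmatE : Xmat s t w eps =
  A^T *m invmx (A *m A^T *m Lest s t eps *m (A *m A^T)) *m A.
Proof. by rewrite /Xmat trmx_mul Wsqrt_sym -Wsqrt_sqr !mulmxA. Qed.

Lemma X1matE (Rd : 'M[R]_(n.-1 + k, n.-1)) : X1mat s t w eps Rd =
  (Rd^T *m Wsqrtinv w)^T *m invmx (Lest s t eps) *m (Rd^T *m Wsqrtinv w).
Proof. by rewrite /X1mat trmx_mul trmxK Wsqrtinv_sym !mulmxA. Qed.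

Lemma Rmat_Wsqrt_right_inverse (Rd : 'M[R]_(n.-1 + k, n.-1)) :
  is_MP_pinv (Rmat R s t) Rd -> A *m (Rd^T *m Wsqrtinv w)^T = 1%:M.
Proof.
case=> RRdR _ _ _; rewrite trmx_mul trmxK Wsqrtinv_sym mulmxA -(mulmxA _ (Wsqrt w)).
rewrite Wsqrt_mulV mulmx1; apply: (inner_inverse_right_inverse (G := col_mx 1%:M 0)) RRdR.
by rewrite /Rmat mul_row_col mul1mx mulmx0 addr0.
Qed.

End GraphMatrices.

Theorem lemma8 (R : rcfType) (n k : nat) (s t : 'I_(n.-1 + k) -> 'I_n)
  (w : 'I_(n.-1 + k) -> R) (eps : 'I_n -> R) (Rd : 'M[R]_(n.-1 + k, n.-1)) :
  (2 <= n)%N ->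
  simple_graph s t ->
  connected_on s t predT ->
  first_edges_spanning_tree s t ->
  (forall l, 0 < w l) ->
  (forall i, 0 < eps i) ->
  is_MP_pinv (@Rmat R n k s t) Rd ->
  lambda_max (@Xmat R n k s t w eps) <= lambda_max (@X1mat R n k s t w eps Rd).
Proof.
move=> _ [no_loop _] _ tree w_gt0 eps_gt0 Rd_pinv.
rewrite XmatE // X1matE; apply: lambda_max_right_inverse_form_le.
- exact: Rmat_Wsqrt_right_inverse.
- exact: Lest_sym.
- exact: Lest_posdef.
Qed.
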